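(* Let $L$ be an IL-algebra and $F$ a distributive filter of $L$. Then the lattice $L/F$ (with $[x]\cup[y]=[x\cup y]$, $[x]\cap[y]=[x\cap y]$) is distributive.
   Context: An IL-algebra is a structure $(L,\cup,\cap,\bot,\to,\ast,1)$ such that $(L,\cup,\cap,\bot)$ is a lattice with least element $\bot$, $(L,\ast,1)$ is a commutative monoid with unit $1$, and for all $x,y,z\in L$: $x\ast y\leq z$ iff $x\leq y\to z$. A filter of $L$ is a non-empty $F\subseteq L$ with $1\in F$, such that $x,y\in F$ implies $x\ast y\in F$ and $x\cap y\in F$, and $x\in F$, $x\leq y$ implies $y\in F$. A filter $F$ is distributive if $((x\cup y)\cap(x\cup z))\to(x\cup(y\cap z))\in F$ for all $x,y,z\in L$. For a filter $F$, $x\,\rho_F\,y$ iff $x\to y\in F$ and $y\to x\in F$; $[x]$ is the $\rho_F$-class of $x$ and $L/F=\{[x]:x\in L\}$, with the operations on classes well defined. *)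

(** The lattice order is x ≤ y iff
    x ∩ y = x. *)
Record ILAlgebra := {
  carrier :> Type;
  join : carrier -> carrier -> carrier;
  meet : carrier -> carrier -> carrier;
  bot : carrier;
  imp : carrier -> carrier -> carrier;
  mul : carrier -> carrier -> carrier;
  one : carrier;
  join_comm : forall x y, join x y = join y x;
  meet_comm : forall x y, meet x y = meet y x;
  join_assoc : forall x y z, join x (join y z) = join (join x y) z;
  meet_assoc : forall x y z, meet x (meet y z) = meet (meet x y) z;
  join_meet_absorb : forall x y, join x (meet x y) = x;
  meet_join_absorb : forall x y, meet x (join x y) = x;
  bot_least : forall x, meet bot x = bot;
  mul_comm : forall x y, mul x y = mul y x;
  mul_assoc : forall x y z, mul x (mul y z) = mul (mul x y) z;
  mul_one : forall x, mul x one = x;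
  residuation : forall x y z, meet (mul x y) z = mul x y <-> meet x (imp y z) = x
}.

Section IL.
Variable L : ILAlgebra.

Definition le (x y : L) : Prop := meet L x y = x.

Definition is_filter (F : L -> Prop) : Prop :=
  (exists x, F x) /\
  F (one L) /\
  (forall x y, F x -> F y -> F (mul L x y)) /\
  (forall x y, F x -> F y -> F (meet L x y)) /\
  (forall x y, F x -> le x y -> F y).

Definition distributive_filter (F : L -> Prop) : Prop :=
  is_filter F /\
  forall x y z : L,
    F (imp L (meet L (join L x y) (join L x z)) (join L x (meet L y z))).

Definition rho (F : L -> Prop) (x y : L) : Prop :=
  F (imp L x y) /\ F (imp L y x).

Definition cls (F : L -> Prop) (x : L) : L -> Prop := fun y => rho F x y.

Definition quotient_distributive (F : L -> Prop) : Prop :=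
  forall x y z : L,
    cls F (meet L x (join L y z)) = cls F (join L (meet L x y) (meet L x z)) /\
    cls F (join L x (meet L y z)) = cls F (meet L (join L x y) (join L x z)).
End IL.

(** In L/F the class order is [x] ≤ [y] iff x → y ∈ F, and F-entailment is
    transitive and stable under meeting with a fixed element.  In every
    lattice x ∪ (y ∩ z) ≤ (x ∪ y) ∩ (x ∪ z); the reverse entailment is exactly
    the defining condition of a distributive filter, which gives the law
    [x] ∪ ([y] ∩ [z]) = ([x] ∪ [y]) ∩ ([x] ∪ [z]).  The dual law then follows by
    the classical lattice argument deriving one distributive law from the
    other, carried out up to F-entailment. *)

From Stdlib Require Import FunctionalExtensionality PropExtensionality.

Section ILAlgebraOrder.
Variable L : ILAlgebra.

Local Notation "x ⊓ y" := (meet L x y) (at level 40, left associativity).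
Local Notation "x ⊔ y" := (join L x y) (at level 50, left associativity).
Local Notation "x ≤ y" := (le L x y) (at level 70).
Local Notation "x * y" := (mul L x y).
Local Notation "x → y" := (imp L x y) (at level 55, right associativity).

Lemma meetxx (x : L) : x ⊓ x = x.
Proof. rewrite <- (join_meet_absorb L x x) at 2. apply meet_join_absorb. Qed.

Lemma le_joinE (x y : L) : x ≤ y <-> x ⊔ y = y.
Proof.
  unfold le; split; intro H.
  - rewrite <- H, join_comm, meet_comm. apply join_meet_absorb.
  - rewrite <- H. apply meet_join_absorb.
Qed.

Lemma le_refl (x : L) : x ≤ x.
Proof. apply meetxx. Qed.

Lemma le_trans (x y z : L) : x ≤ y -> y ≤ z -> x ≤ z.
Proof. unfold le; intros Hxy Hyz. rewrite <- Hxy, <- meet_assoc, Hyz. reflexivity. Qed.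

Lemma lexI (x y z : L) : x ≤ y -> x ≤ z -> x ≤ y ⊓ z.
Proof. unfold le; intros Hy Hz. rewrite meet_assoc, Hy, Hz. reflexivity. Qed.

Lemma leUx (x y z : L) : x ≤ z -> y ≤ z -> x ⊔ y ≤ z.
Proof. rewrite !le_joinE; intros Hx Hy. rewrite <- join_assoc, Hy, Hx. reflexivity. Qed.

Lemma leIxl (x y z : L) : x ≤ z -> x ⊓ y ≤ z.
Proof.
  apply le_trans. unfold le.
  rewrite (meet_comm L _ x), meet_assoc, meetxx. reflexivity.
Qed.

Lemma leIxr (x y z : L) : y ≤ z -> x ⊓ y ≤ z.
Proof. rewrite meet_comm. apply leIxl. Qed.

Lemma lexUl (x y z : L) : x ≤ y -> x ≤ y ⊔ z.
Proof. intro H. apply le_trans with y; [exact H | apply meet_join_absorb]. Qed.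

Lemma lexUr (x y z : L) : x ≤ z -> x ≤ y ⊔ z.
Proof. rewrite join_comm. apply lexUl. Qed.

Lemma le_imp_of_mul (x y z : L) : x * y ≤ z -> x ≤ y → z.
Proof. apply residuation. Qed.

Lemma mul_le_of_le_imp (x y z : L) : x ≤ y → z -> x * y ≤ z.
Proof. apply residuation. Qed.

Lemma mul_impl (x y : L) : (x → y) * x ≤ y.
Proof. apply mul_le_of_le_imp, le_refl. Qed.

Lemma le_mul2r (x y z : L) : x ≤ y -> x * z ≤ y * z.
Proof.
  intro Hxy. apply mul_le_of_le_imp.
  apply le_trans with y; [exact Hxy | apply le_imp_of_mul, le_refl].
Qed.

Lemma le_mul2l (x y z : L) : x ≤ y -> z * x ≤ z * y.
Proof. rewrite !(mul_comm L z). apply le_mul2r. Qed.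

Lemma le_one_imp (x y : L) : x ≤ y -> one L ≤ x → y.
Proof. intro Hxy. apply le_imp_of_mul. rewrite mul_comm, mul_one. exact Hxy. Qed.

End ILAlgebraOrder.

Ltac lattice :=
  solve [eauto 10 using le_refl, lexI, leUx, leIxl, leIxr, lexUl, lexUr].

Section FilterEntailment.
Variable L : ILAlgebra.
Variable F : L -> Prop.
Hypothesis F_filter : is_filter L F.

Local Notation "x ⊓ y" := (meet L x y) (at level 40, left associativity).
Local Notation "x ⊔ y" := (join L x y) (at level 50, left associativity).
Local Notation "x ≤ y" := (le L x y) (at level 70).
Local Notation "x * y" := (mul L x y).
Local Notation "x → y" := (imp L x y) (at level 55, right associativity).

Lemma filter_le (x y : L) : F x -> x ≤ y -> F y.
Proof. destruct F_filter as (_ & _ & _ & _ & H). apply H. Qed.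

Lemma filter_imp_le (x y : L) : x ≤ y -> F (x → y).
Proof.
  intro Hxy. apply filter_le with (one L).
  - destruct F_filter as (_ & H & _). exact H.
  - now apply le_one_imp.
Qed.

Lemma filter_imp_trans (x y z : L) : F (x → y) -> F (y → z) -> F (x → z).
Proof.
  intros Hxy Hyz. apply filter_le with ((x → y) * (y → z)).
  - destruct F_filter as (_ & _ & H & _). now apply H.
  - apply le_imp_of_mul.
    rewrite (mul_comm L (x → y)), <- mul_assoc.
    apply le_trans with ((y → z) * y); [apply le_mul2l, mul_impl | apply mul_impl].
Qed.

(* Meeting with [one] keeps the [c] component: 1 * (c ⊓ x) ≤ c. *)
Lemma filter_imp_meet2l (c x y : L) : F (x → y) -> F (c ⊓ x → c ⊓ y).
Proof.
  intro Hxy. apply filter_le with ((x → y) ⊓ one L).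
  - destruct F_filter as (_ & F_one & _ & F_meet & _). now apply F_meet.
  - apply le_imp_of_mul, lexI.
    + apply le_trans with (one L * (c ⊓ x)); [apply le_mul2r; lattice |].
      rewrite mul_comm, mul_one. lattice.
    + apply le_trans with ((x → y) * x); [| apply mul_impl].
      apply le_trans with ((x → y) * (c ⊓ x)); [apply le_mul2r; lattice |].
      apply le_mul2l; lattice.
Qed.

Lemma cls_eq (x y : L) : rho L F x y -> cls L F x = cls L F y.
Proof.
  intros [Hxy Hyx]. apply functional_extensionality; intro z.
  apply propositional_extensionality.
  unfold cls, rho; split; intros [Hz1 Hz2]; split; eauto using filter_imp_trans.
Qed.

Hypothesis F_distr :
  forall x y z : L, F ((x ⊔ y) ⊓ (x ⊔ z) → x ⊔ y ⊓ z).

Lemma rho_join_meet_distr (x y z : L) :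
  rho L F (x ⊔ y ⊓ z) ((x ⊔ y) ⊓ (x ⊔ z)).
Proof. split; [apply filter_imp_le; lattice | apply F_distr]. Qed.

Lemma rho_meet_join_distr (x y z : L) :
  rho L F (x ⊓ (y ⊔ z)) (x ⊓ y ⊔ x ⊓ z).
Proof.
  split; [| apply filter_imp_le; lattice].
  apply filter_imp_trans with (x ⊓ ((z ⊔ x) ⊓ (z ⊔ y))); [apply filter_imp_le; lattice |].
  apply filter_imp_trans with (x ⊓ (z ⊔ x ⊓ y)); [now apply filter_imp_meet2l |].
  apply filter_imp_trans with ((x ⊓ y ⊔ x) ⊓ (x ⊓ y ⊔ z)); [apply filter_imp_le; lattice |].
  apply F_distr.
Qed.

End FilterEntailment.

Theorem mainTheorem8 (L : ILAlgebra) (F : L -> Prop) :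
  distributive_filter L F -> quotient_distributive L F.
Proof.
  intros [F_filter F_distr] x y z.
  split; apply cls_eq; auto.
  - now apply rho_meet_join_distr.
  - now apply rho_join_meet_distr.
Qed.
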